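(* Let $G_n$ be the de Bruijn graph of span $n$ defined in the context. Let $r$ be any vertex of $G_n$, and for each vertex $v\neq r$ of $G_n$ let $e_v$ be any arc of $G_n$ with tail $v$. Let $H$ be the spanning subgraph of $G_n$ whose arc set is $\{e_v : v\in V(G_n)\setminus\{r\}\}$. Let $W$ be a walk in $G_n$ starting at $r$ which avoids $H$. Let $v$ be a vertex of $G_n$ which is not on a directed cycle of $H$ and which is exhausted by $W$, and let $W_v$ be the initial subwalk of $W$ starting at $r$ and finishing at the moment it exhausts $v$. Then every vertex $u$ of $H_v$ is exhausted by $W_v$.
   Context: Let $A$ be a finite alphabet with a linear order $<$. Let $\mathcal{F}$ be a set of words over $A$ (forbidden words). A word $w$ is said to be in the language if the bi-infinite periodic sequence $\cdots www\cdots$ contains no element of $\mathcal{F}$ as a factor (contiguous subword). For $k\ge 1$, $W_k$ denotes the set of words of length $k$ in the language. Fix $n\geq 1$ and consider the directed graph whose vertex set is $A^n$ and whose arcs are the pairs $(as,sb)$ with $a,b\in A$, $s\in A^{n-1}$ and $asb\in W_{n+1}$; the label of the arc $(as,sb)$ is $b$. The de Bruijn graph of span $n$, $G_n$, is a strongly connected component of maximum size of this digraph. Vertices are identified with their words. A walk $W$ in $G_n$ starting at $r$ avoids $H$ if it is constructed as follows: start at $r$; if the current walk is $v_0e_0\cdots v_i$ and there is an arc with tail $v_i$ not in $H$ that has not yet been used by the walk, extend the walk by one such arc; otherwise, if the arc $e_{v_i}$ (when defined) has not yet been used, extend the walk by $e_{v_i}$; otherwise stop. A walk exhausts a vertex $x$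 if it uses every arc of $G_n$ having $x$ as head or as tail. For a vertex $v$ not lying on a directed cycle of $H$, $H_v$ denotes the subtree of $H$ converging to $v$, i.e. the set of vertices $u$ (including $v$) from which there is a directed path to $v$ using arcs of $H$. *)

From mathcomp Require Import all_boot all_order all_algebra.
From mathcomp Require Import boolp.
From Stdlib Require Import Relations.
Set Implicit Arguments. Unset Strict Implicit. Unset Printing Implicit Defensive.

Section DeBruijn.
Variable A : finType.

(* The bi-infinite periodic sequence ... w w w ... as a function int -> A,
   position 0 being the first letter of (one copy of) w.  Only used for w <> [::]
   (x0 is a dummy default, irrelevant since the index is < size w). *)
Definition periodic_seq (x0 : A) (w : seq A) (i : int) : A :=
  nth x0 w `|(i %% (size w)%:Z)%Z|%N.

Definition factor_of_periodic (u w : seq A) : Prop :=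
  match w with
  | [::] => False
  | x0 :: _ => exists i : int,
      u = mkseq (fun j => periodic_seq x0 w (i + j%:Z)%R) (size u)
  end.

Definition in_language (F : seq A -> Prop) (w : seq A) : Prop :=
  ~ (exists u, F u /\ factor_of_periodic u w).

Definition Wk (F : seq A -> Prop) (k : nat) (w : seq A) : Prop :=
  size w = k /\ in_language F w.

Definition dbarc (F : seq A -> Prop) (n : nat) (x y : n.-tuple A) : Prop :=
  exists (a b : A) (s : seq A),
    val x = a :: s /\ val y = rcons s b /\ Wk F n.+1 (a :: rcons s b).

Definition reach (F : seq A -> Prop) (n : nat) : relation (n.-tuple A) :=
  clos_refl_trans (n.-tuple A) (@dbarc F n).

Definition scc (F : seq A -> Prop) (n : nat) (x : n.-tuple A) : {set n.-tuple A} :=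
  [set y | `[< reach F x y /\ reach F y x >] ].

Definition is_debruijn (F : seq A -> Prop) (n : nat) (V : {set n.-tuple A}) : Prop :=
  (exists x, V = scc F x) /\ (forall x : n.-tuple A, #|scc F x| <= #|V|).

Definition garc (F : seq A -> Prop) (n : nat) (V : {set n.-tuple A})
  (x y : n.-tuple A) : Prop := x \in V /\ y \in V /\ dbarc F x y.

Definition inH (n : nat) (V : {set n.-tuple A}) (r : n.-tuple A)
  (next : n.-tuple A -> n.-tuple A) (x y : n.-tuple A) : Prop :=
  x \in V /\ x <> r /\ y = next x.

(* The walk r, p_0, p_1, ... given by its vertex sequence r :: p ;
   its arcs (in order) are the consecutive pairs. *)
Definition walk_arcs (n : nat) (r : n.-tuple A) (p : seq (n.-tuple A)) :=
  zip (r :: p) p.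

Definition free_arc (F : seq A -> Prop) (n : nat) (V : {set n.-tuple A})
  (r : n.-tuple A) (next : n.-tuple A -> n.-tuple A)
  (used : seq (n.-tuple A * n.-tuple A)) (x : n.-tuple A) : Prop :=
  exists y, garc F V x y /\ ~ inH V r next x y /\ (x, y) \notin used.

(* W = r :: p is a (complete) walk starting at r that avoids H *)
Definition avoids (F : seq A -> Prop) (n : nat) (V : {set n.-tuple A})
  (r : n.-tuple A) (next : n.-tuple A -> n.-tuple A) (p : seq (n.-tuple A)) : Prop :=
  (forall i, i < size p ->
     let x := last r (take i p) in
     let used := walk_arcs r (take i p) in
     let y := nth r p i in
     (free_arc F V r next used x ->
        garc F V x y /\ ~ inH V r next x y /\ (x, y) \notin used) /\
     (~ free_arc F V r next used x ->
        x <> r /\ (x, next x) \notin used /\ y = next x)) /\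
  (let x := last r p in
   ~ free_arc F V r next (walk_arcs r p) x /\
   (x = r \/ (x, next x) \in walk_arcs r p)).

Definition exhausts (F : seq A -> Prop) (n : nat) (V : {set n.-tuple A})
  (arcs : seq (n.-tuple A * n.-tuple A)) (x : n.-tuple A) : Prop :=
  forall y, (garc F V x y -> (x, y) \in arcs) /\ (garc F V y x -> (y, x) \in arcs).

Definition on_H_cycle (n : nat) (V : {set n.-tuple A}) (r : n.-tuple A)
  (next : n.-tuple A -> n.-tuple A) (v : n.-tuple A) : Prop :=
  exists y, inH V r next v y /\ clos_refl_trans _ (inH V r next) y v.

Definition in_Hsubtree (n : nat) (V : {set n.-tuple A}) (r : n.-tuple A)
  (next : n.-tuple A -> n.-tuple A) (v u : n.-tuple A) : Prop :=
  clos_refl_trans _ (inH V r next) u v.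

End DeBruijn.

From mathcomp Require Import all_boot all_order all_algebra.
From mathcomp Require Import boolp.
From Stdlib Require Import Relations.
Set Implicit Arguments. Unset Strict Implicit. Unset Printing Implicit Defensive.
Import GRing.Theory.

(* Two facts drive the argument.  First, in a de Bruijn graph no vertex has
   more in-arcs than out-arcs, because the language is closed under rotation.
   Second, a walk avoiding H takes e_u only after every other arc out of u,
   and, for u <> r, it has entered u at least as often as it has left it.  So
   once e_u is used, all out-arcs of u are used, hence at least as many
   in-arcs, hence all in-arcs: u is exhausted.  Exhausting v uses e_u for
   every H-predecessor u of v, and induction along H-paths covers H_v. *)

Lemma drop1_take_rot1 (T : Type) (s : seq T) : drop 1 s = take (size s).-1 (rot 1 s).
Proof. by case: s => [|c t] //=; rewrite rot1_cons drop0 -cats1 take_size_cat. Qed.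

Lemma card_set_mem_count (T : finType) (s : seq T) (P : pred T) :
  uniq s -> #|[set e in s | P e]| = count P s.
Proof.
move=> uniq_s; rewrite -size_filter -(card_uniqP (filter_uniq P uniq_s)).
by apply: eq_card => e; rewrite inE mem_filter andbC.
Qed.

Section Rotation.
Variables (A : finType) (F : seq A -> Prop).

Lemma periodic_seq_rcons (x0 x1 c : A) (t : seq A) (z : int) :
  periodic_seq x0 (rcons t c) z = periodic_seq x1 (c :: t) (z + 1)%R.
Proof.
rewrite /periodic_seq size_rcons /=; set N := (size t).+1.
have := modz_ge0 z (isT : (N%:Z != 0)%R).
case Ez: (z %% N%:Z)%Z => [m|//] _.
have ltmN : m < N by rewrite -ltz_nat -Ez ltz_pmod.
have -> : ((z + 1) %% N%:Z)%Z = ((m + 1) %% N)%N.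
  by rewrite -modzDml Ez -modz_nat.
rewrite /= nth_rcons; case: (ltngtP m (size t)) => [ltmt|//|->].
- by rewrite modn_small ?addn1 //=; apply: set_nth_default.
- by move: ltmN; rewrite ltnS leqNgt => /negP.
- by rewrite addn1 modnn.
Qed.

Lemma factor_of_periodic_rot1 (u w : seq A) :
  factor_of_periodic u (rot 1 w) -> factor_of_periodic u w.
Proof.
case: w => [|c t] //; rewrite rot1_cons /factor_of_periodic.
case Et: (rcons t c) => [|d t'] // [i u_eq]; exists (i + 1)%R.
rewrite {1}u_eq -Et; apply: eq_mkseq => j.
by rewrite (periodic_seq_rcons d c) addrAC.
Qed.

Lemma in_language_rot (m : nat) (w : seq A) :
  in_language F w -> in_language F (rot m w).
Proof.
have rot1P s : in_language F s -> in_language F (rot 1 s).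
  by move=> Ls [u [Fu /factor_of_periodic_rot1 fact_u]]; apply: Ls; exists u.
elim: m => [|m IHm] Lw; first by rewrite rot0.
case: (ltnP m (size w)) => [ltm|lem]; first by rewrite rotS //; apply/rot1P/IHm.
by rewrite rot_oversize ?(leq_trans lem).
Qed.

End Rotation.

Section Arcs.
Variables (A : finType) (F : seq A -> Prop) (n : nat).

Lemma dbarc_window (x0 : n.-tuple A) (w : seq A) :
  0 < n -> size w = n.+1 -> in_language F w ->
  dbarc F (insubd x0 (take n w)) (insubd x0 (drop 1 w)).
Proof.
case: n x0 => // m y0 _; case: w => [|c t] //= [].
case/lastP: t => [|s b] //; rewrite size_rcons => -[size_s] Lw.
exists c, b, s; rewrite !val_insubd /= drop0 size_rcons size_s eqxx.
rewrite -cats1 take_size_cat //= size_s eqxx cats1.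
by split=> //; split=> //; split; first by rewrite /= size_rcons size_s.
Qed.

(* The windows of the rotations of w form a closed walk of length n + 1. *)
Lemma reach_window_cycle (x0 : n.-tuple A) (w : seq A) :
  0 < n -> size w = n.+1 -> in_language F w ->
  reach F (insubd x0 (drop 1 w)) (insubd x0 (take n w)).
Proof.
move=> n_gt0 size_w Lw; pose win j : n.-tuple A := insubd x0 (take n (rot j w)).
have win_arc j : j < n.+1 -> dbarc F (win j) (win j.+1).
  move=> ltj; rewrite /win; have size_wj : size (rot j w) = n.+1 by rewrite size_rot.
  have -> : take n (rot j.+1 w) = drop 1 (rot j w).
    by rewrite rotS ?size_w // drop1_take_rot1 size_wj.
  exact: dbarc_window n_gt0 size_wj (in_language_rot Lw).
have reach_win m : m <= n -> reach F (win 1) (win m.+1).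
  elim: m => [|m IHm] lem; first exact: rt_refl.
  apply: rt_trans (IHm (ltnW lem)) (rt_step _ _ _ _ _); exact: win_arc.
have := reach_win n (leqnn n).
by rewrite /win -[in rot n.+1 w]size_w rot_size drop1_take_rot1 size_w.
Qed.

Lemma dbarc_reach_back (x y : n.-tuple A) : dbarc F x y -> reach F y x.
Proof.
case=> a [b [s [Ex [Ey [size_w Lw]]]]]; set w := a :: rcons s b in size_w Lw.
have size_as : size (a :: s) = n by rewrite -Ex size_tuple.
have Ey' : insubd x (drop 1 w) = y.
  by apply: val_inj; rewrite val_insubd drop1 /= -Ey size_tuple eqxx.
have Ex' : insubd x (take n w) = x.
  apply: val_inj; rewrite val_insubd /w -rcons_cons -cats1 (take_size_cat _ size_as).
  by rewrite size_as eqxx -Ex.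
have n_gt0 : 0 < n by rewrite -size_as.
by have := reach_window_cycle x n_gt0 size_w Lw; rewrite Ex' Ey'.
Qed.

Lemma debruijn_dbarc_closed (V : {set n.-tuple A}) (x y : n.-tuple A) :
  is_debruijn F V -> x \in V -> dbarc F x y -> y \in V.
Proof.
have in_scc z t : (t \in scc F z) <-> (reach F z t /\ reach F t z).
  by rewrite inE; split=> /asboolP.
move=> [[z ->] _] /in_scc [zx xz] xy; apply/in_scc; split.
- exact: rt_trans zx (rt_step _ _ _ _ xy).
- exact: rt_trans (dbarc_reach_back xy) xz.
Qed.

Definition in_arcs (V : {set n.-tuple A}) (u : n.-tuple A) :=
  [set e : n.-tuple A * n.-tuple A | (e.2 == u) && `[< garc F V e.1 e.2 >]].

Definition out_arcs (V : {set n.-tuple A}) (u : n.-tuple A) :=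
  [set e : n.-tuple A * n.-tuple A | (e.1 == u) && `[< garc F V e.1 e.2 >]].

Lemma in_arcsP (V : {set n.-tuple A}) (u : n.-tuple A) e :
  e \in in_arcs V u ->
  exists a s b, [/\ e = (e.1, u), val e.1 = a :: s, val u = rcons s b,
                    in_language F (a :: rcons s b) & u \in V].
Proof.
case: e => x y; rewrite inE /= => /andP [/eqP -> /asboolP [_ [uV]]].
by case=> a [b [s [Ex [Eu [_ Lw]]]]]; exists a, s, b.
Qed.

(* The arc (as, sb) into u = sb is sent to the arc (sb, sba) out of u. *)
Lemma card_in_arcs_le_out (V : {set n.-tuple A}) (u : n.-tuple A) :
  is_debruijn F V -> #|in_arcs V u| <= #|out_arcs V u|.
Proof.
move=> debV; case Eu: (val u) => [|c t].
  rewrite (_ : in_arcs V u = set0) ?cards0 //; apply/eqP; rewrite -subset0.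
  apply/subsetP => e /in_arcsP [a [s [b [_ _ Eu' _ _]]]].
  by rewrite Eu in Eu'; case: s Eu'.
have size_t a : size (rcons t a) = n by rewrite size_rcons -(size_tuple u) Eu.
pose g (e : n.-tuple A * n.-tuple A) := (u, insubd u (rcons t (head c (val e.1)))).
have val_g2 e : val (g e).2 = rcons t (head c (val e.1)).
  by rewrite val_insubd size_t eqxx.
rewrite -(card_in_imset (f := g)).
  apply: subset_leq_card; apply/subsetP => _ /imsetP [e ein ->].
  have [a [s [b [_ E1 E2 Lw uV]]]] := in_arcsP ein.
  have ug : dbarc F u (g e).2.
    exists c, a, t; rewrite val_g2 E1; split=> //; split=> //.
    split; first by rewrite /= size_t.
    have -> : c :: rcons t a = rot 1 (a :: rcons s b) by rewrite rot1_cons -E2 Eu.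
    exact: in_language_rot.
  rewrite inE eqxx; apply/asboolP; split=> //; split=> //.
  exact: debruijn_dbarc_closed ug.
move=> e1 e2 in1 in2 /(congr1 (fun e => val e.2)).
have [a1 [s1 [b1 [Ee1 E11 E21 _ _]]]] := in_arcsP in1.
have [a2 [s2 [b2 [Ee2 E12 E22 _ _]]]] := in_arcsP in2.
rewrite /= !val_g2 E11 E12 /= => /(@rcons_injr _ t) Ea.
have [Es _] : (s1, b1) = (s2, b2) by apply: rcons_inj; rewrite -E21 -E22.
by rewrite Ee1 Ee2; congr (_, _); apply: val_inj; rewrite E11 E12 Ea Es.
Qed.

End Arcs.

Section Walks.
Variables (A : finType) (F : seq A -> Prop) (n : nat).
Variables (V : {set n.-tuple A}) (r : n.-tuple A) (next : n.-tuple A -> n.-tuple A).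

Lemma walk_arcs_rcons (q : seq (n.-tuple A)) (y : n.-tuple A) :
  walk_arcs r (rcons q y) = rcons (walk_arcs r q) (last r q, y).
Proof. by elim: q r => [|z q IHq] x //=; rewrite /walk_arcs /= in IHq *; rewrite IHq. Qed.

Lemma count_walk_arcs_balance (q : seq (n.-tuple A)) (u : n.-tuple A) :
  count (fun e => e.1 == u) (walk_arcs r q) + (last r q == u) =
  (r == u) + count (fun e => e.2 == u) (walk_arcs r q).
Proof.
elim: q r => [|y q IHq] x /=; first by rewrite addnC.
by rewrite /walk_arcs /= in IHq *; rewrite -addnA IHq addnA.
Qed.

Definition avoiding_prefix (q : seq (n.-tuple A)) : Prop :=
  [/\ {in walk_arcs r q, forall e, garc F V e.1 e.2}, last r q \in V,
      uniq (walk_arcs r q) &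
      forall u y, inH V r next u (next u) -> (u, next u) \in walk_arcs r q ->
        garc F V u y -> (u, y) \in walk_arcs r q].

Hypothesis next_arc : forall x, x \in V -> x <> r -> garc F V x (next x).

Lemma avoiding_prefix_rcons (q : seq (n.-tuple A)) (y : n.-tuple A) :
  let x := last r q in let used := walk_arcs r q in
  (free_arc F V r next used x ->
     garc F V x y /\ ~ inH V r next x y /\ (x, y) \notin used) ->
  (~ free_arc F V r next used x ->
     x <> r /\ (x, next x) \notin used /\ y = next x) ->
  avoiding_prefix q -> avoiding_prefix (rcons q y).
Proof.
move=> x used free_step forced_step [arcs_q xV uniq_q e_u_last].
have [xy_arc xy_new] : garc F V x y /\ (x, y) \notin used.
  case: (pselect (free_arc F V r next used x)) => [/free_step [] | /forced_step [xr [nu ->]]].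
    by move=> xy [].
  by split=> //; apply: next_arc.
rewrite /avoiding_prefix walk_arcs_rcons last_rcons rcons_uniq xy_new uniq_q.
split=> //; first by move=> e; rewrite mem_rcons inE => /predU1P [-> | /arcs_q].
  by case: xy_arc => _ [].
move=> u z Hu; rewrite !mem_rcons !in_cons.
case/orP=> [/eqP [ux ny] | used_u] uz; last by rewrite (e_u_last u z Hu used_u uz) orbT.
subst u; case: (eqVneq z y) => [-> | zy]; first by rewrite eqxx.
apply/orP; right; apply: contraT => z_new.
have nfree : ~ free_arc F V r next used x.
  move=> fr; have [_ [nH _]] := free_step fr; apply: nH; case: Hu => uV [ur _].
  by split=> //; split.
exfalso; apply: nfree; exists z; split=> //; split=> // -[_ [_ zn]].
by move: zy; rewrite zn ny eqxx.
Qed.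

Lemma avoids_take (p : seq (n.-tuple A)) (i : nat) :
  r \in V -> avoids F V r next p -> i <= size p -> avoiding_prefix (take i p).
Proof.
move=> rV [forced_step _]; elim: i => [|i IHi] lei.
  by rewrite take0; split=> // u y _; rewrite in_nil.
rewrite (take_nth r lei); have [free_step nfree_step] := forced_step i lei.
exact: avoiding_prefix_rcons free_step nfree_step (IHi (ltnW lei)).
Qed.

Hypothesis debV : is_debruijn F V.

Lemma exhausts_of_used_H_arc (q : seq (n.-tuple A)) (u : n.-tuple A) :
  avoiding_prefix q -> inH V r next u (next u) ->
  (u, next u) \in walk_arcs r q -> exhausts F V (walk_arcs r q) u.
Proof.
move=> [arcs_q _ uniq_q e_u_last] Hu used_u; have [_ [ur _]] := Hu.
set s := walk_arcs r q.
set used_in := [set e in s | e.2 == u].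
have out_used : out_arcs F V u \subset [set e in s | e.1 == u].
  apply/subsetP => -[x y]; rewrite !inE /= => /andP [/eqP -> /asboolP uy].
  by rewrite eqxx andbT; apply: e_u_last.
have used_in_sub : used_in \subset in_arcs F V u.
  apply/subsetP => -[x y]; rewrite !inE /= => /andP [xy /eqP yu].
  by rewrite yu eqxx; apply/asboolP; rewrite -yu; apply: (arcs_q (x, y)).
have in_le_used : #|in_arcs F V u| <= #|used_in|.
  apply: leq_trans (card_in_arcs_le_out u debV) _.
  apply: leq_trans (subset_leq_card out_used) _.
  rewrite !card_set_mem_count //.
  have := count_walk_arcs_balance q u; rewrite -/s.
  move/eqP/negbTE: ur; rewrite eq_sym => -> /=; rewrite add0n => <-; apply: leq_addr.
have used_inE : used_in = in_arcs F V u.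
  by apply/eqP; rewrite eqEcard used_in_sub.
move=> y; split=> [uy | yu]; first exact: e_u_last.
have : (y, u) \in in_arcs F V u by rewrite inE eqxx; apply/asboolP.
by rewrite -used_inE inE => /andP [].
Qed.

Lemma exhausts_Hsubtree (q : seq (n.-tuple A)) (v u : n.-tuple A) :
  avoiding_prefix q -> exhausts F V (walk_arcs r q) v ->
  in_Hsubtree V r next v u -> exhausts F V (walk_arcs r q) u.
Proof.
move=> inv_q exh_v /clos_rt_rt1n_iff uv; elim: uv exh_v => // x y z [xV [xr ->]] _ IH.
move=> /IH exh_next; apply: exhausts_of_used_H_arc => //.
exact: (exh_next x).2 (next_arc xV xr).
Qed.

End Walks.

Theorem lemma1 (A : finType) (F : seq A -> Prop) (n : nat)
  (V : {set n.-tuple A}) (r : n.-tuple A) (next : n.-tuple A -> n.-tuple A)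
  (p : seq (n.-tuple A)) (v : n.-tuple A) (k : nat) :
  0 < n ->
  is_debruijn F V ->
  r \in V ->
  (forall x, x \in V -> x <> r -> garc F V x (next x)) ->
  avoids F V r next p ->
  v \in V ->
  ~ on_H_cycle V r next v ->
  exhausts F V (walk_arcs r p) v ->
  k <= size p ->
  exhausts F V (walk_arcs r (take k p)) v ->
  (forall j, j < k -> ~ exhausts F V (walk_arcs r (take j p)) v) ->
  forall u, in_Hsubtree V r next v u ->
    exhausts F V (walk_arcs r (take k p)) u.
Proof.
move=> _ debV rV next_arc avoids_p _ _ _ lek exh_v _ u vu.
have inv_prefix := avoids_take next_arc rV avoids_p lek.
exact: (exhausts_Hsubtree next_arc debV inv_prefix exh_v vu).
Qed.
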